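(* Let $\mu>0$ and let $f:[0,1]\to\mathbb{R}$ be bounded. Then $\lim_{n\to+\infty}\mathscr{L}_n^K f(x)=f(x)$ at every point $x\in[0,1]$ at which $f$ is continuous. Moreover, for every $f\in C([0,1])$, $\mathscr{L}_n^K f(x)\to f(x)$ as $n\to+\infty$ uniformly for $x\in[0,1]$.
   Context: Fix $\mu>0$. Let $\ln_\mu(x):=\ln(1+\mu+x)$ for $x\in[0,1]$, and for $f:[0,1]\to\mathbb{R}$ let $f_\mu(x):=f(x)/\ln_\mu(x)$. Let $p_{n,k}(y):=\binom{n}{k}y^k(1-y)^{n-k}$ and $a_{n+1}(x):=\dfrac{\ln\left(1+\frac{x}{(n+1)(1+\mu)}\right)}{\ln\left(1+\frac{1}{(n+1)(1+\mu)}\right)}$, $x\in[0,1]$. For $n\in\mathbb{N}$ define $\mathscr{L}_n^K f(x):=\ln_\mu(x)\sum_{k=0}^n p_{n,k}(a_{n+1}(x))\,(n+1)\int_{k/(n+1)}^{(k+1)/(n+1)} f_\mu(t)\,dt$, $x\in[0,1]$. *)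

From HB Require Import structures.
From mathcomp Require Import all_boot all_order all_algebra.
From mathcomp Require Import all_classical all_reals all_analysis.
Set Implicit Arguments. Unset Strict Implicit. Unset Printing Implicit Defensive.
Import Order.TTheory GRing.Theory Num.Theory.
Import numFieldNormedType.Exports.
Local Open Scope classical_set_scope.
Local Open Scope ring_scope.

Definition ln_mu {R : realType} (mu x : R) : R := ln (1 + mu + x).

Definition f_mu {R : realType} (mu : R) (f : R -> R) (x : R) : R :=
  f x / ln_mu mu x.

Definition bern {R : realType} (n k : nat) (y : R) : R :=
  'C(n, k)%:R * y ^+ k * (1 - y) ^+ (n - k).

Definition a_next {R : realType} (mu : R) (n : nat) (x : R) : R :=
  ln (1 + x / ((n.+1)%:R * (1 + mu))) / ln (1 + 1 / ((n.+1)%:R * (1 + mu))).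

Definition LK {R : realType} (mu : R) (n : nat) (f : R -> R) (x : R) : R :=
  ln_mu mu x *
  \sum_(k < n.+1)
     bern n k (a_next mu n x) *
     ((n.+1)%:R *
      Rintegral lebesgue_measure `[k%:R / (n.+1)%:R, (k.+1)%:R / (n.+1)%:R]
                (f_mu mu f)).

(* L_n^K f (x) = ln_mu(x) * K_n f_mu (a_{n+1}(x)), where K_n is the classical
   Kantorovich operator: Bernstein weights applied to the means of f_mu over the
   cells [k/(n+1), (k+1)/(n+1)].  Since a_{n+1}(x) lies within 1/(n+1) of x and
   ln_mu is bounded above and away from 0 on [0, 1], everything reduces to
     |K_n g (y) - g x| <= eps + 18 M / (del^2 (n+1))   whenever |y - x| <= 1/(n+1),
   for |g| <= M and g with modulus (eps, del) at x.  On each cell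
   |g t - g x| <= eps + 2M/del^2 (t - x)^2, and the second moment
   sum_k p_{n,k}(y) (k/(n+1) - y)^2 of the Bernstein weights is at most 1/(n+1).
   For continuous f, Heine-Cantor makes the modulus, hence the bound, uniform in x. *)

From HB Require Import structures.
From mathcomp Require Import all_boot all_order all_algebra.
From mathcomp Require Import all_classical all_reals all_analysis measurable_realfun.
From mathcomp Require Import ring lra.
Import Order.TTheory GRing.Theory Num.Theory.
Import numFieldNormedType.Exports.
Local Open Scope classical_set_scope.
Local Open Scope ring_scope.

Section Bernstein.
Context {R : realType}.
Implicit Types (n k : nat) (a y : R) (F G B : nat -> R).

Definition bernstein n F y : R := \sum_(k < n.+1) bern n k y * F k.

Lemma bern_small n k y : (n < k)%N -> bern n k y = 0.
Proof. by move=> nk; rewrite /bern bin_small // !mul0r. Qed.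

Lemma bern_ge0 n k y : 0 <= y <= 1 -> 0 <= bern n k y.
Proof. by case/andP=> y0 y1; rewrite !mulr_ge0 ?exprn_ge0 ?subr_ge0. Qed.

Lemma bernS0 n y : bern n.+1 0 y = (1 - y) * bern n 0 y.
Proof. by rewrite /bern !bin0 !subn0 !expr0 !mul1r exprS. Qed.

Lemma bernSS n k y :
  bern n.+1 k.+1 y = y * bern n k y + (1 - y) * bern n k.+1 y.
Proof.
rewrite /bern binS natrD subSS; case: (ltnP k n) => kn.
  by rewrite -(subnSK kn) !exprS; ring.
by rewrite (@bin_small n k.+1) ?ltnS // !mul0r mulr0 addr0 !exprS; ring.
Qed.

Lemma bernsteinS n F y :
  bernstein n.+1 F y = y * bernstein n (F \o succn) y + (1 - y) * bernstein n F y.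
Proof.
have bump0 i : bump 0 i = i.+1 by [].
rewrite /bernstein big_ord_recl bernS0.
under eq_bigr do rewrite /= bump0 bernSS mulrDl -(mulrA y) -(mulrA (1 - y)).
rewrite big_split /= [X in _ + (_ + X)]big_ord_recr /= (@bern_small n n.+1) //.
rewrite [X in _ = _ + _ * X]big_ord_recl mul0r mulr0 addr0 /=.
under [X in _ * (_ + X)]eq_bigr do rewrite bump0.
rewrite mulrDr !mulr_sumr; ring.
Qed.

Lemma eq_bernstein n F G y :
  (forall k, (k <= n)%N -> F k = G k) -> bernstein n F y = bernstein n G y.
Proof. by move=> FG; apply: eq_bigr => -[k kn] _; rewrite FG. Qed.

Lemma bernsteinD n F G y :
  bernstein n (fun k => F k + G k) y = bernstein n F y + bernstein n G y.
Proof. by rewrite /bernstein -big_split; apply: eq_bigr => k _; rewrite mulrDr. Qed.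

Lemma bernsteinZ n a F y : bernstein n (fun k => a * F k) y = a * bernstein n F y.
Proof. by rewrite /bernstein mulr_sumr; apply: eq_bigr => k _; rewrite mulrCA. Qed.

Lemma bernstein_cst n a y : bernstein n (fun=> a) y = a.
Proof.
elim: n => [|n IH]; last by rewrite bernsteinS IH; ring.
by rewrite /bernstein big_ord1 /bern bin0 !expr0 !mulr1 mul1r.
Qed.

Lemma bernstein_id n y : bernstein n (fun k => k%:R) y = n%:R * y.
Proof.
elim: n => [|n IH].
  by rewrite /bernstein big_ord1 mulr0 mul0r.
rewrite bernsteinS (@eq_bernstein _ _ (fun k => k%:R + 1)) => [|k _]; last first.
  by rewrite /= -natr1.
by rewrite bernsteinD IH bernstein_cst -natr1; ring.
Qed.

Lemma bernstein_sqr n y :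
  bernstein n (fun k => k%:R ^+ 2) y = n%:R ^+ 2 * y ^+ 2 + n%:R * y * (1 - y).
Proof.
elim: n => [|n IH].
  by rewrite /bernstein big_ord1 expr0n mulr0 /= !mul0r add0r.
rewrite bernsteinS (@eq_bernstein _ _ (fun k => k%:R ^+ 2 + (2 * k%:R + 1))).
  by rewrite !bernsteinD bernsteinZ IH bernstein_id bernstein_cst -natr1; ring.
by move=> k _; rewrite /= -natr1; ring.
Qed.

Lemma bernstein_var n y : 0 <= y <= 1 ->
  bernstein n (fun k => (k%:R / n.+1%:R - y) ^+ 2) y <= n.+1%:R^-1.
Proof.
move=> /andP[y0 y1]; set h := n.+1%:R^-1; set m : R := n%:R.
have hm : h * (m + 1) = 1 by rewrite /h /m natr1 mulVf.
have h0 : 0 <= h by rewrite /h invr_ge0.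
rewrite (@eq_bernstein _ _
    (fun k => h ^+ 2 * k%:R ^+ 2 + ((- 2 * y * h) * k%:R + y ^+ 2))).
  rewrite !bernsteinD !bernsteinZ bernstein_sqr bernstein_id bernstein_cst -/m.
  have -> : h ^+ 2 * (m ^+ 2 * y ^+ 2 + m * y * (1 - y))
        + (- 2 * y * h * (m * y) + y ^+ 2)
      = h ^+ 2 * (m * y * (1 - y) + y ^+ 2)
        + y ^+ 2 * (h * (m + 1) - 1) * (h * (m + 1) - 1 - 2 * h) by ring.
  rewrite hm subrr mulr0 mul0r addr0.
  have m0 : 0 <= m by rewrite /m ler0n.
  have my : m * y * (1 - y) + y ^+ 2 <= m + 1 by nra.
  apply: le_trans (ler_wpM2l (exprn_ge0 2 h0) my) _.
  by rewrite expr2 -mulrA hm mulr1.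
by move=> k _; rewrite /h; ring.
Qed.

Lemma bernstein_dist_le n F B a y : 0 <= y <= 1 ->
  (forall k, (k <= n)%N -> `|F k - a| <= B k) ->
  `|bernstein n F y - a| <= bernstein n B y.
Proof.
move=> y01 FB; rewrite -[in X in `|_ - X|](bernstein_cst n a y) /bernstein -sumrB.
apply: le_trans (ler_norm_sum _ _ _) _; apply: ler_sum => -[k kn] _.
rewrite -mulrBr normrM ger0_norm ?bern_ge0 //.
by apply: ler_wpM2l; [exact: bern_ge0 | exact: FB].
Qed.

End Bernstein.

Section Kantorovich.
Context {R : realType}.
Implicit Types (g : R -> R) (n : nat).

Lemma mean_dist_le g (a b v B : R) : a < b -> measurable_fun `[a, b] g ->
  (forall t, t \in `[a, b] -> `|g t - v| <= B) ->
  `|(b - a)^-1 * Rintegral lebesgue_measure `[a, b] g - v| <= B.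
Proof.
move=> ab mg gB; have ba0 : 0 < b - a by rewrite subr_gt0.
have mI : measurable (`[a, b] : set R) by exact: measurable_itv.
have lenI : lebesgue_measure (`[a, b] : set R) = (b - a)%:E.
  by rewrite lebesgue_measure_itv /= lte_fin ab -EFinD.
have finI : (lebesgue_measure (`[a, b] : set R) < +oo)%E by rewrite lenI ltry.
have ig : lebesgue_measure.-integrable `[a, b] (EFin \o g).
  apply: measurable_bounded_integrable => //; rewrite /bounded_near.
  near=> M => t /= /gB tB; apply: le_trans (_ : `|v| + B <= M).
    by rewrite -[g t](subrK v); apply: le_trans (ler_normD _ _) _; rewrite addrC lerD2l.
  by near: M; apply: nbhs_pinfty_ge; exact: num_real.
have ic c : lebesgue_measure.-integrable `[a, b] (EFin \o fun=> c).
  exact: measurable_bounded_integrable (measurable_cst _) (bounded_cst _ _).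
have intc c : Rintegral lebesgue_measure `[a, b] (fun=> c) = c * (b - a).
  by rewrite Rintegral_cst // -[b - a]/(fine (b - a)%:E) -lenI.
rewrite ler_distl mulrC ler_pdivlMr // ler_pdivrMr // -!intc.
apply/andP; split; apply: le_Rintegral => // t /gB; rewrite ler_distl => /andP[] //.
Unshelve. all: by end_near.
Qed.

Lemma dist_le_modulus_sqr g {x t eps del M : R} : 0 < del -> 0 <= eps ->
  (`|t - x| < del -> `|g t - g x| <= eps) -> `|g t - g x| <= M ->
  `|g t - g x| <= eps + M / del ^+ 2 * (t - x) ^+ 2.
Proof.
move=> del0 eps0 near_x gM; have M0 : 0 <= M := le_trans (normr_ge0 _) gM.
have [/near_x gt|far] := ltrP `|t - x| del.
  by apply: le_trans gt _; rewrite lerDl mulr_ge0 ?divr_ge0 ?sqr_ge0.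
have del2 : del ^+ 2 <= (t - x) ^+ 2.
  by rewrite -[(t - x) ^+ 2]real_normK ?num_real //; nra.
apply: le_trans gM _; apply: ler_wpDl eps0 _; rewrite -mulrA ler_peMr //.
by rewrite ler_pdivlMl ?exprn_gt0 // mulr1.
Qed.

Lemma cell_sqr_dist n k (t x y : R) :
  t \in `[k%:R / n.+1%:R, k.+1%:R / n.+1%:R] -> `|y - x| <= n.+1%:R^-1 ->
  (t - x) ^+ 2 <= 3 * (2 * n.+1%:R^-1 ^+ 2 + (k%:R / n.+1%:R - y) ^+ 2).
Proof.
set h := n.+1%:R^-1; rewrite in_itv /= -natr1 mulrDl mul1r -/h => /andP[tk th] yx.
have h0 : 0 < h by rewrite invr_gt0.
have tk2 : (t - k%:R * h) ^+ 2 <= h ^+ 2 by rewrite lerXn2r ?nnegrE; lra.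
have yx2 : (y - x) ^+ 2 <= h ^+ 2.
  by rewrite -[(y - x) ^+ 2]real_normK ?num_real //; have := normr_ge0 (y - x); nra.
have -> : t - x = (t - k%:R * h) + (k%:R * h - y) + (y - x) by ring.
set a := t - _ in tk2 *; set b := _ - y; set c := y - x in yx2 *.
have := sqr_ge0 (a - b); have := sqr_ge0 (b - c); have := sqr_ge0 (a - c).
nra.
Qed.

Definition kantorovich n g (y : R) : R :=
  bernstein n (fun k => n.+1%:R *
    Rintegral lebesgue_measure `[k%:R / n.+1%:R, k.+1%:R / n.+1%:R] g) y.

Lemma kantorovich_dist_le g (M eps del x y : R) n :
  measurable_fun (`[0, 1] : set R) g -> (forall t, t \in `[0, 1] -> `|g t| <= M) ->
  0 < del -> 0 <= eps -> x \in `[0, 1] ->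
  (forall t, t \in `[0, 1] -> `|t - x| < del -> `|g t - g x| <= eps) ->
  0 <= y <= 1 -> `|y - x| <= n.+1%:R^-1 ->
  `|kantorovich n g y - g x| <= eps + 18 * M / del ^+ 2 * n.+1%:R^-1.
Proof.
move=> mg gM del0 eps0 x01 near_x y01 yx.
set h := n.+1%:R^-1; have h0 : 0 < h by rewrite invr_gt0.
have M0 : 0 <= M := le_trans (normr_ge0 _) (gM x x01).
set C := 2 * M / del ^+ 2.
have C0 : 0 <= C by rewrite divr_ge0 ?mulr_ge0 ?exprn_ge0 // ltW.
apply: le_trans (bernstein_dist_le _ _ (fun k =>
    eps + C * (3 * (2 * h ^+ 2 + (k%:R / n.+1%:R - y) ^+ 2))) _ _ y01 _) _.
  move=> k kn; set a := k%:R / n.+1%:R; set b := k.+1%:R / n.+1%:R.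
  have ba : b - a = h by rewrite /a /b -natr1 /h; field.
  have cell01 : `[a, b] `<=` `[0, 1].
    move=> t /=; rewrite !in_itv /= => /andP[ta tb]; apply/andP; split.
      by apply: le_trans ta; rewrite /a divr_ge0.
    by apply: le_trans tb _; rewrite /b ler_pdivrMr ?mul1r ?ler_nat ?ltr0n.
  rewrite -[n.+1%:R]invrK -/h -ba; apply: mean_dist_le; first by rewrite -subr_gt0 ba.
    exact: measurable_funS (measurable_itv _) cell01 mg.
  move=> t tab; have t01 : t \in `[0, 1] by exact: cell01.
  have gtx : `|g t - g x| <= 2 * M.
    by apply: le_trans (ler_normB _ _) _; rewrite mulr2n mulrDl mul1r lerD ?gM.
  apply: le_trans (dist_le_modulus_sqr g del0 eps0 (near_x t t01) gtx) _.
  by rewrite lerD2l; apply: ler_wpM2l => //; rewrite ba; exact: cell_sqr_dist tab yx.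
rewrite (bernsteinD n (fun=> eps)) bernstein_cst lerD2l !bernsteinZ.
rewrite (bernsteinD n (fun=> 2 * h ^+ 2)) bernstein_cst.
have := bernstein_var n y y01; rewrite -/h => var.
have h2 : h ^+ 2 <= h by rewrite expr2 ger_pMl // invf_le1 ?ler1n.
rewrite (_ : 18 * M / del ^+ 2 = 9 * C); last by rewrite /C; ring.
by rewrite [9 * C]mulrC -[C * 9 * h]mulrA; apply: ler_wpM2l => //; lra.
Qed.

End Kantorovich.

Section Modulus.
Context {R : realType}.
Implicit Types (D : set R) (g : R -> R).

Lemma cvg_within_modulus {D g x eps} : 0 < eps ->
  g @ within D (nbhs x) --> g x ->
  exists2 del, 0 < del & forall t, D t -> `|t - x| < del -> `|g t - g x| < eps.
Proof.
move=> eps0 /cvgrPdist_lt /(_ eps eps0) /nbhs_ballP[del del0 near_x].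
exists del => // t Dt tx; rewrite distrC.
by apply: near_x Dt; rewrite /ball /= distrC.
Qed.

Lemma compact_uniform_modulus {D g eps} : compact D -> {within D, continuous g} ->
  0 < eps -> exists2 del, 0 < del &
    forall x t, D x -> D t -> `|t - x| < del -> `|g t - g x| < eps.
Proof.
move=> cD /subspace_continuousP cg eps0.
(* Near each point one radius works by the triangle inequality; compactness,
   with radii filtered along [0^'+], makes it global. *)
have cover := (near_covering_withinP D).2 ((compact_near_coveringP D).1 cD).
have : \forall del \near 0^'+, forall x, D x ->
    forall t, D t -> `|t - x| < del -> `|g t - g x| < eps.
  apply: (cover _ _
    (fun del x => forall t, D t -> `|t - x| < del -> `|g t - g x| < eps)).
  move=> x Dx; have eps20 : 0 < eps / 2 by rewrite divr_gt0.
  have [d d0 near_x] := cvg_within_modulus eps20 (cg x Dx).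
  have d20 : 0 < d / 2 by rewrite divr_gt0.
  near=> y del => /= Dy t Dt ty.
  have yx : `|y - x| < d / 2.
    by near: y; apply/nbhs_ballP; exists (d / 2) => // z; rewrite /ball /= distrC.
  have del_d : del < d / 2 by near: del; exact: nbhs_right_lt.
  have tx : `|t - x| < d.
    rewrite (_ : t - x = (t - y) + (y - x)); last by ring.
    by apply: le_lt_trans (ler_normD _ _) _; lra.
  rewrite (_ : g t - g y = (g t - g x) - (g y - g x)); last by ring.
  apply: le_lt_trans (ler_normB _ _) _.
  have := near_x t Dt tx; have := near_x y Dy (lt_trans yx _); lra.
move=> /(filterI (nbhs_right_gt 0)) /filter_ex[del [del0 unif]].
by exists del => // x t Dx; apply: unif.
Unshelve. all: by end_near.
Qed.

Lemma harmonic_eventually_lt (L eps E e : R) : L * eps < e ->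
  \forall n \near \oo, L * (eps + E * n.+1%:R^-1) < e.
Proof.
move=> Le; apply: cvgr_lt Le; rewrite -[eps in X in _ --> X]addr0 -(mulr0 E).
exact: cvgMr (cvgD (cvg_cst _) (cvgMr cvg_harmonic)).
Qed.

End Modulus.

Section LogRatio.
Context {R : realType}.

Lemma ln1Dx_ge (v : R) : -1 < v -> v / (1 + v) <= ln (1 + v).
Proof.
move=> v1; have v0 : 0 < 1 + v by lra.
have := @le_ln1Dx R (- (v / (1 + v))).
have -> : 1 + - (v / (1 + v)) = (1 + v)^-1 by field; rewrite gt_eqF.
rewrite lnV ?posrE // lerN2; apply.
by rewrite ltrNl opprK ltr_pdivrMr // mul1r; lra.
Qed.

Lemma ln_ratio_itv_dist (u x : R) : 0 < u -> 0 <= x <= 1 ->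
  0 <= ln (1 + x * u) / ln (1 + u) <= 1 /\
  `|ln (1 + x * u) / ln (1 + u) - x| <= u.
Proof.
move=> u0 /andP[x0 x1].
set A := ln (1 + x * u); set B := ln (1 + u).
have xu0 : 0 <= x * u by rewrite mulr_ge0 // ltW.
have B0 : 0 < B by rewrite /B ln_gt0 //; lra.
have A0 : 0 <= A by rewrite /A ln_ge0 //; lra.
have AB : A <= B by rewrite /A /B ler_ln ?posrE ?lerD2l ?ger_pMl //; lra.
have Axu : A <= x * u by rewrite /A le_ln1Dx //; lra.
have Bu : B <= u by rewrite /B le_ln1Dx //; lra.
have xuA : x * u <= A * (1 + x * u).
  by rewrite -ler_pdivrMr ?ln1Dx_ge //; lra.
have uB : u <= B * (1 + u) by rewrite -ler_pdivrMr ?ln1Dx_ge //; lra.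
split; first by rewrite divr_ge0 ?(ltW B0) //= ler_pdivrMr // mul1r.
have -> : A / B - x = (A - x * B) / B by field; rewrite gt_eqF.
rewrite normrM normfV (gtr0_norm B0) ler_pdivrMr // ler_norml.
apply/andP; split; nra.
Qed.

End LogRatio.

Section LogOperator.
Context {R : realType}.
Implicit Types (mu x t : R) (f : R -> R) (n : nat).

Lemma a_next_itv_dist mu n x : 0 <= mu -> 0 <= x <= 1 ->
  0 <= a_next mu n x <= 1 /\ `|a_next mu n x - x| <= n.+1%:R^-1.
Proof.
move=> mu0 x01; set u := (n.+1%:R * (1 + mu))^-1.
have u0 : 0 < u by rewrite invr_gt0 mulr_gt0 //; lra.
have uh : u <= n.+1%:R^-1.
  by rewrite lef_pV2 ?posrE ?mulr_gt0 // ?ler_peMr //; lra.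
rewrite /a_next -/u mul1r.
have [-> ux] := ln_ratio_itv_dist u x u0 x01; split => //; exact: le_trans ux uh.
Qed.

Lemma ln_mu_bounds mu t : 0 <= mu -> t \in `[0, 1] ->
  ln (1 + mu) <= ln_mu mu t <= ln (2 + mu).
Proof.
by move=> mu0; rewrite in_itv /= /ln_mu => /andP[t0 t1]; rewrite !ler_ln ?posrE; lra.
Qed.

Lemma continuous_inv_ln_mu mu t : 0 < mu + t ->
  {for t, continuous (fun s => (ln_mu mu s)^-1)}.
Proof.
move=> mut; have lnt : 1 < 1 + mu + t by lra.
apply: continuousV; first by rewrite /ln_mu gt_eqF // ln_gt0.
apply: (@continuous_comp _ _ _ (fun s => 1 + mu + s)).
  by apply: cvgD; [exact: cvg_cst | exact: cvg_id].
by apply: continuous_ln; lra.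
Qed.

Lemma measurable_f_mu mu f : 0 < mu ->
  measurable_fun (`[0, 1] : set R) f -> measurable_fun (`[0, 1] : set R) (f_mu mu f).
Proof.
move=> mu0 mf; apply: measurable_funM => //.
have sub01 : (`[0, 1] : set R) `<=` `]-mu, +oo[.
  by move=> t /=; rewrite !in_itv /= andbT => /andP[t0 _]; lra.
apply: measurable_funS sub01 _; first exact: measurable_itv.
apply: open_continuous_measurable_fun; first exact: interval_open.
move=> t; rewrite inE /= in_itv /= andbT => mut.
by apply: continuous_inv_ln_mu; lra.
Qed.

Lemma f_mu_cvg_within {mu f} {D : set R} {x} : 0 < mu + x ->
  f @ within D (nbhs x) --> f x -> f_mu mu f @ within D (nbhs x) --> f_mu mu f x.
Proof.
move=> mux fx; apply: (cvgM fx).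
by apply: cvg_within_filter; exact: continuous_inv_ln_mu.
Qed.

Lemma within_continuous_f_mu {mu f} : 0 < mu ->
  {within `[0, 1], continuous f} -> {within `[0, 1], continuous (f_mu mu f)}.
Proof.
move=> mu0 /subspace_continuousP cf; apply/subspace_continuousP => x x01.
apply: f_mu_cvg_within (cf x x01).
by move: x01; rewrite /= in_itv /= => /andP[x0 _]; lra.
Qed.

Lemma LK_dist_le {mu f} {M eps del x : R} n : 0 < mu ->
  measurable_fun (`[0, 1] : set R) f -> (forall t, t \in `[0, 1] -> `|f t| <= M) ->
  0 < del -> 0 <= eps -> x \in `[0, 1] ->
  (forall t, t \in `[0, 1] -> `|t - x| < del -> `|f_mu mu f t - f_mu mu f x| <= eps) ->
  `|LK mu n f x - f x| <=
    ln (2 + mu) * (eps + 18 * (M / ln (1 + mu)) / del ^+ 2 * n.+1%:R^-1).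
Proof.
move=> mu0 mf fM del0 eps0 x01 near_x.
have lnmu0 : 0 < ln (1 + mu) by rewrite ln_gt0 //; lra.
have /andP[lnx_ge lnx_le] := ln_mu_bounds mu x (ltW mu0) x01.
have lnx0 : 0 < ln_mu mu x := lt_le_trans lnmu0 lnx_ge.
have fmuM t : t \in `[0, 1] -> `|f_mu mu f t| <= M / ln (1 + mu).
  move=> t01; have /andP[lnt_ge _] := ln_mu_bounds mu t (ltW mu0) t01.
  have lnt0 : 0 < ln_mu mu t := lt_le_trans lnmu0 lnt_ge.
  rewrite /f_mu normrM normfV (gtr0_norm lnt0).
  have M0 : 0 <= M := le_trans (normr_ge0 _) (fM t t01).
  apply: le_trans (_ : M / ln_mu mu t <= _).
    by apply: ler_wpM2r; [rewrite invr_ge0 ltW | exact: fM].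
  by apply: ler_wpM2l => //; rewrite lef_pV2 ?posrE.
have x01' : 0 <= x <= 1 by move: x01; rewrite in_itv.
have [a01 ax] := a_next_itv_dist mu n x (ltW mu0) x01'.
have -> : LK mu n f x - f x =
    ln_mu mu x * (kantorovich n (f_mu mu f) (a_next mu n x) - f_mu mu f x).
  by rewrite mulrBr /f_mu mulrCA divff ?gt_eqF // mulr1.
rewrite normrM gtr0_norm //; apply: ler_pM => //; first exact: ltW.
by apply: kantorovich_dist_le => //; exact: measurable_f_mu.
Qed.

Lemma LK_near_close {mu f} {M del e : R} : 0 < mu ->
  measurable_fun (`[0, 1] : set R) f -> (forall t, t \in `[0, 1] -> `|f t| <= M) ->
  0 < del -> 0 < e ->
  \forall n \near \oo, forall x, x \in `[0, 1] ->
    (forall t, t \in `[0, 1] -> `|t - x| < del ->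
       `|f_mu mu f t - f_mu mu f x| < e / (2 * ln (2 + mu))) ->
    `|LK mu n f x - f x| < e.
Proof.
move=> mu0 mf fM del0 e0; set L := ln (2 + mu).
have L0 : 0 < L by rewrite ln_gt0 //; lra.
have eps0 : 0 <= e / (2 * L) by rewrite divr_ge0 ?mulr_ge0 // ltW.
have Leps : L * (e / (2 * L)) < e.
  by rewrite (_ : _ * _ = e / 2); [lra | field; rewrite gt_eqF].
near=> n => x x01 near_x.
have near_x' t : t \in `[0, 1] -> `|t - x| < del ->
    `|f_mu mu f t - f_mu mu f x| <= e / (2 * L).
  by move=> t01 /(near_x t t01)/ltW.
apply: le_lt_trans (LK_dist_le n mu0 mf fM del0 eps0 x01 near_x') _.
by near: n; exact: harmonic_eventually_lt.
Unshelve. all: by end_near.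
Qed.

End LogOperator.

Theorem theorem3p1 (R : realType) (mu : R) (hmu : 0 < mu) :
  (forall f : R -> R,
     measurable_fun (`[0, 1] : set R) f ->
     (exists M : R, forall t, t \in `[0, 1] -> `|f t| <= M) ->
     forall x : R, x \in `[0, 1] ->
       f @ within (`[0, 1] : set R) (nbhs x) --> f x ->
       (fun n => LK mu n f x) @ \oo --> f x)
  /\
  (forall f : R -> R,
     {within (`[0, 1] : set R), continuous f} ->
     forall eps : R, 0 < eps ->
       \forall n \near \oo, forall x : R, x \in `[0, 1] ->
         `|LK mu n f x - f x| < eps).
Proof.
have tol0 e : 0 < e -> 0 < e / (2 * ln (2 + mu)).
  by move=> e0; rewrite divr_gt0 // mulr_gt0 // ln_gt0 //; lra.
split=> [f mf [M fM] x x01 fx|f cf e /[dup] e0 /tol0 tol].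
  have mux : 0 < mu + x by move: x01; rewrite in_itv /= => /andP[x0 _]; lra.
  have fmux := f_mu_cvg_within mux fx.
  apply/cvgrPdist_lt => e /[dup] e0 /tol0 /cvg_within_modulus/(_ fmux).
  move=> [del del0 near_x]; apply: filterS (LK_near_close hmu mf fM del0 e0).
  by move=> n close; rewrite distrC; exact: close.
have mf : measurable_fun (`[0, 1] : set R) f.
  exact: subspace_continuous_measurable_fun (measurable_itv _) cf.
have [c _ fc] : exists2 c, c \in `[0, 1] & forall t, t \in `[0, 1] -> `|f t| <= `|f c|.
  apply: EVT_max ler01 _ => t; exact: continuous_comp (cf t) (@norm_continuous _ R^o _).
have [del del0 unif] := compact_uniform_modulus (@segment_compact R 0 1)
  (within_continuous_f_mu hmu cf) tol.
apply: filterS (LK_near_close hmu mf fc del0 e0) => n close x x01.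
by apply: close => // t; exact: unif.
Qed.
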